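(* Let $R\subset S$ be an FCP almost-Prüfer extension. Then $\widetilde R=\widehat R$ is the least element $T\in[R,S]$ such that $T\subseteq S$ is integral.
   Context: All rings are commutative with identity. $[R,S]$ is the set of $R$-subalgebras of $S$; $R\subseteq S$ has FCP if every chain in $[R,S]$ is finite. A flat epimorphism is a flat ring morphism which is an epimorphism of commutative rings. $A\subseteq B$ is Prüfer if $A\subseteq U$ is a flat epimorphism for every $U\in[A,B]$. $\widetilde R$ (Prüfer hull) is the greatest $U\in[R,S]$ with $R\subseteq U$ Prüfer; $\widehat R$ (Morita hull) is the greatest $U\in[R,S]$ with $R\subseteq U$ a flat epimorphism. $R\subseteq S$ is almost-Prüfer if there is $T\in[R,S]$ with $R\subseteq T$ Prüfer and $T\subseteq S$ integral. *)

(* Ring extensions R ⊆ S are modelled inside a fixed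
   commutative ring S: every ring of [R,S] is a subring of S given as a
   predicate S -> Prop. *)
From mathcomp Require Import all_boot all_algebra.
Set Implicit Arguments. Unset Strict Implicit. Unset Printing Implicit Defensive.
Import GRing.Theory.
Local Open Scope ring_scope.

Section Defs.
Variable S : comNzRingType.

Definition incl (A B : S -> Prop) := forall x, A x -> B x.

Definition subring (A : S -> Prop) :=
  [/\ A 0, A 1, (forall x y, A x -> A y -> A (x - y))
   & (forall x y, A x -> A y -> A (x * y))].

Definition interm (A B U : S -> Prop) := [/\ subring U, incl A U & incl U B].

Definition is_mod (A : S -> Prop) (M : zmodType) (sc : S -> M -> M) :=
  forall a b (m n : M), A a -> A b ->
  [/\ sc a (m + n) = sc a m + sc a n, sc (a + b) m = sc a m + sc b m,
      sc (a * b) m = sc a (sc b m) & sc 1 m = m].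

Definition is_Alinear (A : S -> Prop) (M N : zmodType)
  (scM : S -> M -> M) (scN : S -> N -> N) (f : M -> N) :=
  (forall x y, f (x + y) = f x + f y) /\ (forall a m, A a -> f (scM a m) = scN a (f m)).

Definition balanced (A U : S -> Prop) (M : zmodType) (sc : S -> M -> M)
  (P : zmodType) (phi : M -> S -> P) :=
  [/\ (forall m m' u, U u -> phi (m + m') u = phi m u + phi m' u),
      (forall m u u', U u -> U u' -> phi m (u + u') = phi m u + phi m u')
    & (forall a m u, A a -> U u -> phi (sc a m) u = phi m (a * u))].

(* the element  sum_i m_i ⊗ u_i  of M ⊗_A U is zero (universal property) *)
Definition tensor_zero (A U : S -> Prop) (M : zmodType) (sc : S -> M -> M)
  (s : seq (M * S)) :=
  forall (P : zmodType) (phi : M -> S -> P), balanced A U sc phi ->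
    \sum_(p <- s) phi p.1 p.2 = 0.

Definition flat (A U : S -> Prop) :=
  forall (M N : zmodType) (scM : S -> M -> M) (scN : S -> N -> N),
    is_mod A scM -> is_mod A scN ->
    forall f : M -> N, is_Alinear A scM scN f -> injective f ->
    forall s : seq (M * S), (forall p, p \in s -> U p.2) ->
      tensor_zero A U scN [seq (f p.1, p.2) | p <- s] ->
      tensor_zero A U scM s.

Definition rmorph_on (C : comPzRingType) (U : S -> Prop) (f : S -> C) :=
  f 1 = 1 /\ forall x y, U x -> U y -> f (x + y) = f x + f y /\ f (x * y) = f x * f y.

Definition epi (A U : S -> Prop) :=
  forall (C : comPzRingType) (f g : S -> C), rmorph_on U f -> rmorph_on U g ->
    (forall a, A a -> f a = g a) -> forall u, U u -> f u = g u.

Definition flat_epi (A U : S -> Prop) := flat A U /\ epi A U.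

Definition Prufer (A B : S -> Prop) := forall U, interm A B U -> flat_epi A U.

Definition integral (T B : S -> Prop) :=
  forall x, B x -> exists p : {poly S},
    [/\ p \is monic, (forall i, T p`_i) & root p x].

Definition almost_Prufer (R B : S -> Prop) :=
  exists T, [/\ interm R B T, Prufer R T & integral T B].

(* FCP: every chain in [R,B] is finite (up to extensional equality) *)
Definition chain_in (R B : S -> Prop) (Ch : (S -> Prop) -> Prop) :=
  (forall U, Ch U -> interm R B U) /\
  (forall U V, Ch U -> Ch V -> incl U V \/ incl V U).

Definition finite_family (Ch : (S -> Prop) -> Prop) :=
  exists (n : nat) (F : nat -> S -> Prop),
    forall U, Ch U -> exists i, (i < n)%N /\ (forall x, U x <-> F i x).

Definition FCP (R B : S -> Prop) :=
  forall Ch, chain_in R B Ch -> finite_family Ch.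

Definition Prufer_hull (R B T : S -> Prop) :=
  [/\ interm R B T, Prufer R T & forall U, interm R B U -> Prufer R U -> incl U T].

Definition Morita_hull (R B T : S -> Prop) :=
  [/\ interm R B T, flat_epi R T & forall U, interm R B U -> flat_epi R U -> incl U T].

Definition least_integral (R B T : S -> Prop) :=
  [/\ interm R B T, integral T B & forall U, interm R B U -> integral U B -> incl T U].

End Defs.

(* Let R ⊆ T be Prüfer with S integral over T. Everything rests on one fact about a
   flat epimorphism R ⊆ U and u ∈ U: the conductor (R : u) = {r ∈ R | r u ∈ R}
   generates the unit ideal of U. Since R ⊆ U is an epimorphism, u ⊗ 1 = 1 ⊗ u in
   S ⊗_R U; by flatness this already holds in (R + R u) ⊗_R U, and the balanced map
   (a + b u, w) ↦ b w modulo (R : u) U then forces 1 ∈ (R : u) U.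
   Write 1 = Σ r_i w_i accordingly. If every w_i is integral over some V ⊇ R, then
   (V : u) is an ideal of V whose extension to the integral extension V[w_1, …, w_n] is
   the unit ideal, hence (determinant trick) it is the unit ideal of V, i.e. u ∈ V.
   With (U, V) = (U, T) every flat epimorphic, in particular every Prüfer, subextension
   lies in T; with (U, V) = (T, V) the ring T lies in every V over which S is integral. *)

From mathcomp Require Import all_boot all_algebra perm ring_quotient.
From HB Require Import structures.
From mathcomp Require Import boolp classical_sets ring.
Set Implicit Arguments. Unset Strict Implicit. Unset Printing Implicit Defensive.
Import GRing.Theory.
Local Open Scope ring_scope.
Local Open Scope quotient_scope.

Section Subring.
Variables (S : comNzRingType) (V : S -> Prop).
Hypothesis sV : subring V.

Lemma subring0 : V 0. Proof. by case: sV. Qed.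
Lemma subring1 : V 1. Proof. by case: sV. Qed.
Lemma subringB x y : V x -> V y -> V (x - y). Proof. by case: sV => _ _ + _; apply. Qed.
Lemma subringM x y : V x -> V y -> V (x * y). Proof. by case: sV => _ _ _; apply. Qed.
Lemma subringN x : V x -> V (- x).
Proof. by rewrite -sub0r; apply: subringB subring0. Qed.
Lemma subringD x y : V x -> V y -> V (x + y).
Proof. by move=> Vx Vy; rewrite -[y]opprK; apply/subringB/subringN. Qed.
Lemma subring_sum I (r : seq I) (P : pred I) (F : I -> S) :
  (forall i, P i -> V (F i)) -> V (\sum_(i <- r | P i) F i).
Proof. by apply: big_ind; [apply: subring0 | apply: subringD]. Qed.
Lemma subring_nat (b : bool) : V b%:R.
Proof. by case: b; [apply: subring1 | apply: subring0]. Qed.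

End Subring.

(** * Bicommutants *)

(* [bicommutant G] is the centre of the commutant of the additive members of G: a
   commutative ring receiving every additive member of G that commutes with G. This is
   how commuting left and right multiplications become ring morphisms into a common
   commutative ring, as [epi] requires. *)
Section Bicommutant.
Variables (X : zmodType) (G : (X -> X) -> Prop).

Lemma morphD0 (h : X -> X) : {morph h : a b / a + b} -> h 0 = 0.
Proof. by move=> hD; apply: (addrI (h 0)); rewrite -hD !addr0. Qed.

Lemma morphDN (h : X -> X) : {morph h : a b / a + b} -> {morph h : a / - a}.
Proof. by move=> hD a; apply/eqP; rewrite -subr_eq0 opprK -hD addNr morphD0. Qed.

Definition in_commutant (h : X -> X) :=
  forall g, G g -> {morph g : a b / a + b} -> forall x, h (g x) = g (h x).

Definition in_bicommutant (e : X -> X) :=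
  [/\ {morph e : a b / a + b}, in_commutant e
    & forall h : X -> X, {morph h : a b / a + b} -> in_commutant h ->
        forall x, e (h x) = h (e x)].

Definition bicommutant := {e : X -> X | in_bicommutant e}.
HB.instance Definition _ := gen_eqMixin bicommutant.
HB.instance Definition _ := gen_choiceMixin bicommutant.

Lemma bicommutant_ext (e e' : bicommutant) : sval e =1 sval e' -> e = e'.
Proof.
case: e e' => [e pe] [e' pe'] /= /funext ee'; subst e'.
by congr exist; apply: Prop_irrelevance.
Qed.

Lemma in_bicommutant0 : in_bicommutant (fun _ => 0).
Proof.
split=> [a b|g _ gD x|h hD _ x]; by rewrite ?addr0 ?morphD0.
Qed.

Lemma in_bicommutant1 : in_bicommutant id.
Proof. by []. Qed.

Lemma in_bicommutantD (e e' : bicommutant) :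
  in_bicommutant (fun x => sval e x + sval e' x).
Proof.
case: e e' => [e [eD eG eH]] [e' [e'D e'G e'H]] /=.
split=> [a b|g Gg gD x|h hD hG x]; first by rewrite eD e'D addrACA.
  by rewrite eG // e'G // gD.
by rewrite eH // e'H // hD.
Qed.

Lemma in_bicommutantN (e : bicommutant) : in_bicommutant (fun x => - sval e x).
Proof.
case: e => [e [eD eG eH]] /=.
split=> [a b|g Gg gD x|h hD hG x]; first by rewrite eD opprD.
  by rewrite eG // morphDN.
by rewrite eH // morphDN.
Qed.

Lemma in_bicommutantM (e e' : bicommutant) :
  in_bicommutant (fun x => sval e (sval e' x)).
Proof.
case: e e' => [e [eD eG eH]] [e' [e'D e'G e'H]] /=.
split=> [a b|g Gg gD x|h hD hG x]; first by rewrite e'D eD.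
  by rewrite e'G // eG.
by rewrite e'H // eH.
Qed.

Definition bicommutant_zero : bicommutant := exist _ _ in_bicommutant0.
Definition bicommutant_one : bicommutant := exist _ _ in_bicommutant1.
Definition bicommutant_add e e' : bicommutant := exist _ _ (in_bicommutantD e e').
Definition bicommutant_opp e : bicommutant := exist _ _ (in_bicommutantN e).
Definition bicommutant_mul e e' : bicommutant := exist _ _ (in_bicommutantM e e').

Lemma bicommutant_addA : associative bicommutant_add.
Proof. by move=> a b c; apply: bicommutant_ext => x /=; rewrite addrA. Qed.
Lemma bicommutant_addC : commutative bicommutant_add.
Proof. by move=> a b; apply: bicommutant_ext => x /=; rewrite addrC. Qed.
Lemma bicommutant_add0 : left_id bicommutant_zero bicommutant_add.
Proof. by move=> a; apply: bicommutant_ext => x /=; rewrite add0r. Qed.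
Lemma bicommutant_addN : left_inverse bicommutant_zero bicommutant_opp bicommutant_add.
Proof. by move=> a; apply: bicommutant_ext => x /=; rewrite addNr. Qed.
HB.instance Definition _ := GRing.isZmodule.Build bicommutant
  bicommutant_addA bicommutant_addC bicommutant_add0 bicommutant_addN.

Lemma bicommutant_mulA : associative bicommutant_mul.
Proof. by move=> a b c; apply: bicommutant_ext. Qed.
Lemma bicommutant_mulC : commutative bicommutant_mul.
Proof.
move=> [e [eD eG eH]] [e' [e'D e'G e'H]]; apply: bicommutant_ext => x /=.
exact: eH.
Qed.
Lemma bicommutant_mul1 : left_id bicommutant_one bicommutant_mul.
Proof. by move=> a; apply: bicommutant_ext. Qed.
Lemma bicommutant_mulDl : left_distributive bicommutant_mul bicommutant_add.
Proof. by move=> a b c; apply: bicommutant_ext. Qed.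
HB.instance Definition _ := GRing.Zmodule_isComPzRing.Build bicommutant
  bicommutant_mulA bicommutant_mulC bicommutant_mul1 bicommutant_mulDl.

Lemma in_bicommutant_G g :
  G g -> {morph g : a b / a + b} -> in_commutant g -> in_bicommutant g.
Proof. by move=> Gg gD gG; split=> // h _ hG x; rewrite hG. Qed.

End Bicommutant.

(** * Epimorphisms and balanced maps *)

Section EpiBalanced.
Variables (S : comNzRingType) (R U : S -> Prop) (P : zmodType).
Hypotheses (sU : subring U) (RU : incl R U).

Local Notation mulS := (fun a m : S => a * m).

(* Balanced maps are normalised to vanish off U, so that right multiplication by y ∈ U,
   which only makes sense on U, is additive on them. *)
Definition balanced_on_U (psi : S -> S -> P) :=
  balanced R U mulS psi /\ forall m w, ~ U w -> psi m w = 0.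

Definition balanced_map := {psi | balanced_on_U psi}.
HB.instance Definition _ := gen_eqMixin balanced_map.
HB.instance Definition _ := gen_choiceMixin balanced_map.

Lemma balanced_map_ext (psi psi' : balanced_map) :
  (forall m w, sval psi m w = sval psi' m w) -> psi = psi'.
Proof.
case: psi psi' => [psi p] [psi' p'] /= eq_psi.
have psi_psi' : psi = psi' by apply/funext => m; apply/funext.
by subst psi'; congr exist; apply: Prop_irrelevance.
Qed.

Lemma balanced_on_U0 : balanced_on_U (fun _ _ => 0).
Proof. by split=> //; split=> *; rewrite ?addr0. Qed.

Lemma balanced_on_UD (a b : balanced_map) :
  balanced_on_U (fun m w => sval a m w + sval b m w).
Proof.
case: a b => [a [[a1 a2 a3] a4]] [b [[b1 b2 b3] b4]] /=.
split=> [|m w nUw]; last by rewrite a4 // b4 // addr0.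
split=> [m m' w Uw|m w w' Uw Uw'|c m w Rc Uw].
- by rewrite a1 // b1 // addrACA.
- by rewrite a2 // b2 // addrACA.
- by rewrite a3 // b3.
Qed.

Lemma balanced_on_UN (a : balanced_map) : balanced_on_U (fun m w => - sval a m w).
Proof.
case: a => [a [[a1 a2 a3] a4]] /=.
split=> [|m w nUw]; last by rewrite a4 // oppr0.
split=> [m m' w Uw|m w w' Uw Uw'|c m w Rc Uw].
- by rewrite a1 // opprD.
- by rewrite a2 // opprD.
- by rewrite a3.
Qed.

Definition balanced_add a b : balanced_map := exist _ _ (balanced_on_UD a b).
Definition balanced_opp a : balanced_map := exist _ _ (balanced_on_UN a).
Definition balanced_zero : balanced_map := exist _ _ balanced_on_U0.

Lemma balanced_addA : associative balanced_add.
Proof. by move=> a b c; apply: balanced_map_ext => m w /=; rewrite addrA. Qed.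
Lemma balanced_addC : commutative balanced_add.
Proof. by move=> a b; apply: balanced_map_ext => m w /=; rewrite addrC. Qed.
Lemma balanced_add0 : left_id balanced_zero balanced_add.
Proof. by move=> a; apply: balanced_map_ext => m w /=; rewrite add0r. Qed.
Lemma balanced_addN : left_inverse balanced_zero balanced_opp balanced_add.
Proof. by move=> a; apply: balanced_map_ext => m w /=; rewrite addNr. Qed.
HB.instance Definition _ := GRing.isZmodule.Build balanced_map
  balanced_addA balanced_addC balanced_add0 balanced_addN.

Lemma balanced_on_U_mull x (a : balanced_map) :
  balanced_on_U (fun m w => sval a (x * m) w).
Proof.
case: a => [a [[a1 a2 a3] a4]] /=; split=> [|m w nUw]; last exact: a4.
split=> [m m' w Uw|m w w' Uw Uw'|c m w Rc Uw].
- by rewrite mulrDr a1.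
- by rewrite a2.
- by rewrite mulrCA; apply: a3.
Qed.

Lemma balanced_on_U_mulr y (a : balanced_map) : U y ->
  balanced_on_U (fun m w => if `[< U w >] then sval a m (y * w) else 0).
Proof.
case: a => [a [[a1 a2 a3] a4]] Uy /=.
split=> [|m w nUw]; last by case: asboolP.
split=> [m m' w Uw|m w w' Uw Uw'|c m w Rc Uw].
- by rewrite asboolT // a1 //; apply: (subringM sU).
- have Uww' := subringD sU Uw Uw'.
  by rewrite !asboolT // mulrDr a2 //; apply: (subringM sU).
- have Ucw : U (c * w) by apply: (subringM sU) => //; apply: RU.
  by rewrite !asboolT // mulrCA; apply: a3; last apply: (subringM sU).
Qed.

Definition mull x (a : balanced_map) : balanced_map :=
  exist _ _ (balanced_on_U_mull x a).
Definition mulr_on_U y (Uy : U y) (a : balanced_map) : balanced_map :=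
  exist _ _ (balanced_on_U_mulr a Uy).

Definition multiplication (g : balanced_map -> balanced_map) :=
  (exists x, g = mull x) \/ (exists y (Uy : U y), g = mulr_on_U Uy).

Lemma multiplication_commutes g : multiplication g ->
  in_commutant multiplication g.
Proof.
move=> mul_g h [[x ->]|[y [Uy ->]]] _ a; apply: balanced_map_ext => m w;
  case: mul_g => [[x' ->]|[y' [Uy' ->]]] //=; first by rewrite mulrCA.
case: asboolP => // Uw; rewrite !asboolT 1?mulrCA //; exact: (subringM sU).
Qed.

Lemma multiplication_additive g : multiplication g -> {morph g : a b / a + b}.
Proof.
case=> [[x ->]|[y [Uy ->]]] a b; apply: balanced_map_ext => m w //=.
by case: asboolP => _; rewrite ?addr0.
Qed.

Lemma in_bicommutant_multiplication g : multiplication g ->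
  in_bicommutant multiplication g.
Proof.
move=> mul_g; apply: in_bicommutant_G => //.
  exact: multiplication_additive.
exact: multiplication_commutes.
Qed.

Local Notation C := (bicommutant multiplication).

Definition left_mul x : C :=
  exist _ (mull x) (in_bicommutant_multiplication (or_introl (ex_intro _ x erefl))).

Definition right_mul y : C :=
  match pselect (U y) with
  | left Uy => exist _ (mulr_on_U Uy)
      (in_bicommutant_multiplication (or_intror (ex_intro _ y (ex_intro _ Uy erefl))))
  | right _ => 1
  end.

Lemma right_mulE y (Uy : U y) a m w :
  sval (sval (right_mul y) a) m w = if `[< U w >] then sval a m (y * w) else 0.
Proof. by rewrite /right_mul; case: pselect. Qed.

Lemma left_mul_rmorph : rmorph_on U left_mul.
Proof.
split=> [|x y Ux Uy]; first by apply: bicommutant_ext => a;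
  apply: balanced_map_ext => m w /=; rewrite mul1r.
split; apply: bicommutant_ext => a; apply: balanced_map_ext => m w /=;
  last by rewrite mulrCA mulrA.
case: a => [a [[a1 a2 a3] a4]] /=.
by have [Uw|nUw] := pselect (U w); [rewrite mulrDl a1 | rewrite !a4 ?addr0].
Qed.

Lemma right_mul_rmorph : rmorph_on U right_mul.
Proof.
have U1 := subring1 sU.
split=> [|x y Ux Uy].
  apply: bicommutant_ext => a; apply: balanced_map_ext => m w.
  rewrite right_mulE //; case: asboolP => Uw; first by rewrite mul1r.
  by case: a => [a [a_bal a4]] /=; rewrite a4.
have [UxDy UxMy] := (subringD sU Ux Uy, subringM sU Ux Uy).
split; apply: bicommutant_ext => a; apply: balanced_map_ext => m w /=;
  rewrite !right_mulE //; case: asboolP => [Uw|_]; rewrite ?addr0 //.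
  by case: a => [a [[a1 a2 a3] a4]] /=; rewrite mulrDl a2 //; apply: (subringM sU).
by rewrite asboolT ?mulrA 1?[y * x]mulrC //; apply: (subringM sU).
Qed.

Lemma left_mul_right_mul r : R r -> left_mul r = right_mul r.
Proof.
move=> Rr; apply: bicommutant_ext => a; apply: balanced_map_ext => m w /=.
rewrite right_mulE; last exact: RU.
case: a => [a [[a1 a2 a3] a4]] /=.
by case: asboolP => [Uw|nUw]; [apply: a3 | rewrite a4].
Qed.

Lemma epi_balanced_swap (phi : S -> S -> P) u :
  epi R U -> balanced R U mulS phi -> U u -> phi u 1 = phi 1 u.
Proof.
move=> epiRU [phi1 phi2 phi3] Uu.
pose phiU m w := if `[< U w >] then phi m w else 0.
have phiU_bal : balanced_on_U phiU.
  split=> [|m w nUw]; last by rewrite /phiU; case: asboolP.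
  split=> [m m' w Uw|m w w' Uw Uw'|c m w Rc Uw]; rewrite /phiU !asboolT //.
  - exact: phi1.
  - exact: phi2.
  - exact: (subringD sU).
  - exact: phi3.
  - by apply: (subringM sU) => //; apply: RU.
have := epiRU _ _ _ left_mul_rmorph right_mul_rmorph left_mul_right_mul u Uu.
move=> /(congr1 (fun e : C => sval (sval e (exist _ phiU phiU_bal)) 1 1)) /=.
by rewrite right_mulE //= /phiU !mulr1 !asboolT //; apply: (subring1 sU).
Qed.

End EpiBalanced.

(** * The conductor of a flat epimorphism *)

Section SpanProd.
Variable S : comNzRingType.

Definition conductor (R : S -> Prop) (u r : S) := R r /\ R (r * u).

Definition span_prod (J A : S -> Prop) (z : S) := exists s : seq (S * S),
  (forall p, p \in s -> J p.1 /\ A p.2) /\ z = \sum_(p <- s) p.1 * p.2.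

Variables J A : S -> Prop.

Lemma span_prod0 : span_prod J A 0.
Proof. by exists [::]; rewrite big_nil. Qed.

Lemma span_prod_mul j a : J j -> A a -> span_prod J A (j * a).
Proof.
move=> Jj Aa; exists [:: (j, a)]; rewrite big_seq1; split=> // p.
by rewrite inE => /eqP ->.
Qed.

Lemma span_prodD x y : span_prod J A x -> span_prod J A y -> span_prod J A (x + y).
Proof.
move=> [s [Js ->]] [t [Jt ->]]; exists (s ++ t); rewrite big_cat; split=> // p.
by rewrite mem_cat => /orP[/Js|/Jt].
Qed.

Lemma span_prodN x : (forall a, A a -> A (- a)) -> span_prod J A x -> span_prod J A (- x).
Proof.
move=> AN [s [Js ->]]; exists [seq (p.1, - p.2) | p <- s]; split.
  by move=> _ /mapP[p /Js[Jp Ap] ->]; split=> //; apply: AN.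
by rewrite big_map -sumrN; apply: eq_bigr => p _; rewrite mulrN.
Qed.

End SpanProd.

Section FlatEpiConductor.
Variables (S : comNzRingType) (R U : S -> Prop) (u : S).
Hypotheses (sR : subring R) (sU : subring U) (RU : incl R U) (Uu : U u).

Local Notation mulS := (fun a m : S => a * m).

Definition Ru_pred : {pred S} := fun x => `[< exists b, R b /\ R (x - b * u) >].

Lemma Ru_closed : zmod_closed Ru_pred.
Proof.
split=> [|x y /asboolP[b [Rb Rx]] /asboolP[c [Rc Ry]]]; apply/asboolP.
  by exists 0; rewrite mul0r subr0; split; apply: subring0.
exists (b - c); split; first exact: subringB.
have -> : x - y - (b - c) * u = (x - b * u) - (y - c * u) by ring.
exact: subringB.
Qed.
HB.instance Definition _ := GRing.isZmodClosed.Build S Ru_pred Ru_closed.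

Definition Ru := {x : S | Ru_pred x}.
HB.instance Definition _ := [isSub for (@proj1_sig S Ru_pred : Ru -> S)].
HB.instance Definition _ := [Choice of Ru by <:].
HB.instance Definition _ := [SubChoice_isSubZmodule of Ru by <:].

Lemma Ru1 : 1 \in Ru_pred.
Proof.
by apply/asboolP; exists 0; rewrite mul0r subr0; split; [apply: subring0 | apply: subring1].
Qed.

Lemma Ru_u : u \in Ru_pred.
Proof.
by apply/asboolP; exists 1; rewrite mul1r subrr; split; [apply: subring1 | apply: subring0].
Qed.

Lemma Ru_mul a x : R a -> x \in Ru_pred -> a * x \in Ru_pred.
Proof.
move=> Ra /asboolP[b [Rb Rx]]; apply/asboolP; exists (a * b); split.
  exact: subringM.
by rewrite -mulrA -mulrBr; apply: subringM.
Qed.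

Definition Ru_scale (a : S) (m : Ru) : Ru :=
  if pselect (R a) is left Ra then exist _ (a * val m) (Ru_mul Ra (valP m)) else m.

Lemma Ru_scaleE a m : R a -> val (Ru_scale a m) = a * val m.
Proof. by rewrite /Ru_scale; case: pselect. Qed.

Lemma Ru_scale_mod : is_mod R Ru_scale.
Proof.
move=> a b m n Ra Rb; have R1 := subring1 sR.
have [RaDb RaMb] := (subringD sR Ra Rb, subringM sR Ra Rb).
by split; apply: val_inj; rewrite /= !Ru_scaleE //= (mulrDr, mulrDl, mulrA, mul1r).
Qed.

Lemma mul_mod : is_mod R mulS.
Proof. by move=> a b m n _ _; rewrite mulrDr mulrDl mulrA mul1r. Qed.

Definition Ru_coef (x : S) : S := xget 0 (fun b => R b /\ R (x - b * u)).

Lemma Ru_coefP x : x \in Ru_pred -> R (Ru_coef x) /\ R (x - Ru_coef x * u).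
Proof. by move=> /asboolP; apply: xgetPex. Qed.

Lemma conductor_coef_diff x b c :
  R b -> R (x - b * u) -> R c -> R (x - c * u) -> conductor R u (b - c).
Proof.
move=> Rb Rxb Rc Rxc; split; first exact: subringB.
have -> : (b - c) * u = (x - c * u) - (x - b * u) by ring.
exact: subringB.
Qed.

Definition conductor_span := span_prod (conductor R u) U.

Definition conductor_span_pred : {pred S} := fun x => `[< conductor_span x >].

Lemma conductor_span_closed : zmod_closed conductor_span_pred.
Proof.
split=> [|x y /asboolP Ix /asboolP Iy]; apply/asboolP; first exact: span_prod0.
apply: span_prodD Ix _; apply: span_prodN Iy; exact: subringN.
Qed.
HB.instance Definition _ :=
  GRing.isZmodClosed.Build S conductor_span_pred conductor_span_closed.

Local Notation Q := (Quotient.quot (conductor_span_pred : zmodClosed S)).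

Lemma piQ_eq0 x : \pi_Q x = 0 -> conductor_span x.
Proof.
by move=> /eqP; rewrite -(raddf0 \pi_Q) -Quotient.idealrBE subr0 => /asboolP.
Qed.

Lemma piQ_conductor b c w : conductor R u (b - c) -> U w -> \pi_Q (b * w) = \pi_Q (c * w).
Proof.
move=> Ibc Uw; apply/eqP; rewrite -Quotient.idealrBE -mulrBl; apply/asboolP.
exact: span_prod_mul.
Qed.

(* (a + b u) (x) w |-> b w : the choice of b only matters modulo (R : u) U. *)
Definition coef_tensor (m : Ru) (w : S) : Q := \pi_Q (Ru_coef (val m) * w).

Lemma coef_tensor_balanced : balanced R U Ru_scale coef_tensor.
Proof.
split=> [m m' w Uw|m w w' Uw Uw'|a m w Ra Uw]; rewrite /coef_tensor.
- rewrite -raddfD -mulrDl; apply: piQ_conductor => //.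
  have [[Rm Rmu] [Rm' Rmu']] := (Ru_coefP (valP m), Ru_coefP (valP m')).
  have [Rs Rsu] := Ru_coefP (valP (m + m')).
  apply: (@conductor_coef_diff (val (m + m'))) => //; first exact: subringD.
  have -> : val (m + m') - (Ru_coef (val m) + Ru_coef (val m')) * u
            = (val m - Ru_coef (val m) * u) + (val m' - Ru_coef (val m') * u).
    by rewrite /=; ring.
  exact: subringD.
- by rewrite -raddfD mulrDr.
- rewrite mulrA; apply: piQ_conductor => //.
  have [Rm Rmu] := Ru_coefP (valP m); have [Rs Rsu] := Ru_coefP (valP (Ru_scale a m)).
  apply: (@conductor_coef_diff (val (Ru_scale a m))) => //; first exact: subringM.
  have -> : val (Ru_scale a m) - Ru_coef (val m) * a * u
            = a * (val m - Ru_coef (val m) * u) by rewrite Ru_scaleE //; ring.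
  exact: subringM.
Qed.

Lemma balanced_oppr (M P : zmodType) (sc : S -> M -> M) (phi : M -> S -> P) m w :
  balanced R U sc phi -> U w -> phi m (- w) = - phi m w.
Proof.
move=> [_ phiD _] Uw; have U0 := subring0 sU; have UNw := subringN sU Uw.
have phi0 : phi m 0 = 0 by apply: (addrI (phi m 0)); rewrite -phiD ?addr0.
by apply/eqP; rewrite -addr_eq0 -phiD // addNr phi0.
Qed.

Definition Ru_one : Ru := exist _ 1 Ru1.
Definition Ru_gen : Ru := exist _ u Ru_u.

Lemma Ru_swap_tensor_zero : flat R U -> epi R U ->
  tensor_zero R U Ru_scale [:: (Ru_one, u); (Ru_gen, -1)].
Proof.
move=> flatRU epiRU; have U1 := subring1 sU.
have val_linear : is_Alinear R Ru_scale mulS val by split=> // a m Ra; rewrite Ru_scaleE.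
apply: (flatRU _ _ _ _ Ru_scale_mod mul_mod _ val_linear val_inj).
  by move=> p; rewrite !inE => /orP[] /eqP -> //; apply: (subringN sU).
move=> P phi phi_bal; rewrite !big_cons big_nil /= addr0 (balanced_oppr _ phi_bal U1).
by rewrite (epi_balanced_swap sU RU epiRU phi_bal Uu) subrr.
Qed.

Lemma conductor_span1 : conductor_span (Ru_coef 1 * u - Ru_coef u) -> conductor_span 1.
Proof.
move=> span_diff; have [R1 U1] := (subring1 sR, subring1 sU).
have [[Rc1 Rc1u] [Rcu Rcuu]] := (Ru_coefP Ru1, Ru_coefP Ru_u).
have cond1 : conductor R u (Ru_coef 1).
  split=> //; have -> : Ru_coef 1 * u = 1 - (1 - Ru_coef 1 * u) by ring.
  exact: subringB.
have condu : conductor R u (Ru_coef u - 1).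
  split; first exact: subringB.
  by rewrite mulrBl mul1r -opprB; apply: subringN.
suff : 1 \in conductor_span_pred by move/asboolP.
have -> : 1 = Ru_coef 1 * u - (Ru_coef u - 1) * 1 - (Ru_coef 1 * u - Ru_coef u) by ring.
apply: rpredB; last exact/asboolP.
by apply: rpredB; apply/asboolP; apply: span_prod_mul.
Qed.

Lemma flat_epi_conductor : flat R U -> epi R U -> conductor_span 1.
Proof.
move=> flatRU epiRU; apply/conductor_span1/piQ_eq0.
have := Ru_swap_tensor_zero flatRU epiRU coef_tensor_balanced.
by rewrite !big_cons big_nil addr0 /coef_tensor -raddfD mulrN1.
Qed.

End FlatEpiConductor.

(** * Integral extensions and ideals *)

Lemma companionmx_powers (S : comNzRingType) (p : {poly S}) (w : S) :
  p \is monic -> root p w ->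
  let v := \col_(i < (size p).-1) w ^+ i in companionmx p *m v = w *: v.
Proof.
move=> mon_p /rootP pw v; apply/colP => i; rewrite !mxE -exprS.
under eq_bigr => j _ do rewrite !mxE.
case: eqP => [i_last|i_notlast].
  have -> : i.+1 = (size p).-1 by rewrite i_last prednK // (leq_ltn_trans _ (ltn_ord i)).
  move: pw; rewrite (horner_coef_wide _ (leqSpred _)) big_ord_recr /=.
  rewrite -lead_coefE (monicP mon_p) mul1r addrC => /eqP; rewrite addr_eq0 => /eqP ->.
  by rewrite -sumrN; apply: eq_bigr => j _; rewrite mulNr.
have i1_lt : (i.+1 < (size p).-1)%N.
  rewrite ltn_neqAle ltn_ord andbT; apply/eqP => i1_last.
  by apply: i_notlast; rewrite -[in RHS]i1_last.
rewrite (bigD1 (Ordinal i1_lt)) //= eqxx mul1r big1 ?addr0 // => j j_neq.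
by move: j_neq; rewrite -val_eqE /= eq_sym => /negbTE ->; rewrite mul0r.
Qed.

Section Eigenvector.
Variables (S : comNzRingType) (n : nat) (K : 'M[S]_n) (v : 'cV[S]_n) (w : S).
Hypothesis Kv : K *m v = w *: v.

Lemma mulmx_eigen_exp m : K ^+ m *m v = w ^+ m *: v.
Proof.
elim: m => [|m IH]; first by rewrite !expr0 scale1r mul1mx.
by rewrite exprSr -mulmxA Kv -scalemxAr IH scalerA -exprS.
Qed.

Lemma mulmx_eigen_horner (Q : {poly S}) :
  (\sum_(i < size Q) Q`_i *: K ^+ i) *m v = Q.[w] *: v.
Proof.
rewrite mulmx_suml horner_coef scaler_suml; apply: eq_bigr => i _.
by rewrite -scalemxAl mulmx_eigen_exp scalerA.
Qed.

End Eigenvector.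

Lemma det_mulmx_eq0 (S : comNzRingType) n (A : 'M[S]_n) (v : 'cV_n) i :
  A *m v = 0 -> \det A * v i 0 = 0.
Proof.
move=> Av; have := congr1 (fun B => (\adj A *m B) i 0) Av.
by rewrite /= mulmxA mul_adj_mx mul_scalar_mx mulmx0 !mxE.
Qed.

Section Ideal.
Variable S : comNzRingType.

Definition ideal (V J : S -> Prop) :=
  [/\ incl J V, J 0, (forall x y, J x -> J y -> J (x + y))
    & (forall a x, V a -> J x -> J (a * x))].

Definition integral_over (V : S -> Prop) (w : S) :=
  exists p : {poly S}, [/\ p \is monic, (forall i, V p`_i) & root p w].

Variables (V J : S -> Prop).
Hypotheses (sV : subring V) (iJ : ideal V J).

Lemma ideal_sub x : J x -> V x. Proof. by case: iJ => + _ _ _; apply. Qed.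
Lemma ideal0 : J 0. Proof. by case: iJ. Qed.
Lemma idealD x y : J x -> J y -> J (x + y). Proof. by case: iJ => _ _ + _; apply. Qed.
Lemma idealM a x : V a -> J x -> J (a * x). Proof. by case: iJ => _ _ _; apply. Qed.
Lemma idealN x : J x -> J (- x).
Proof. by rewrite -mulN1r; apply: idealM; apply: (subringN sV); apply: (subring1 sV). Qed.
Lemma ideal_sum I (r : seq I) (P : pred I) (F : I -> S) :
  (forall i, P i -> J (F i)) -> J (\sum_(i <- r | P i) F i).
Proof. by apply: big_ind; [apply: ideal0 | apply: idealD]. Qed.

Lemma ideal_det1B n (M : 'M[S]_n) :
  (forall i j, J (M i j)) -> J (\det (1%:M - M) - 1).
Proof.
move=> JM; rewrite -[X in _ - X](det1 S n) /determinant -sumrB.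
apply: ideal_sum => s _; rewrite -mulrBr; apply: idealM.
  case: (odd_perm s); rewrite ?expr1 ?expr0; last exact: (subring1 sV).
  exact/(subringN sV)/(subring1 sV).
pose congr x y := [/\ V x, V y & J (x - y)].
suff [] : congr (\prod_i (1%:M - M) i (s i)) (\prod_i (1%:M : 'M_n) i (s i)) by [].
apply: (big_ind2 congr).
- by split; [apply: subring1 | apply: subring1 | rewrite subrr; apply: ideal0].
- move=> x1 x2 y1 y2 [Vx1 Vx2 Jx] [Vy1 Vy2 Jy]; split; try exact: subringM.
  have -> : x1 * y1 - x2 * y2 = x1 * (y1 - y2) + y2 * (x1 - x2) by ring.
  by apply: idealD; apply: idealM.
- move=> i _; rewrite !mxE; have Vnat := subring_nat sV (i == s i).
  split=> //; first by apply: (subringB sV) => //; apply: ideal_sub.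
  by rewrite addrAC subrr add0r; apply: idealN.
Qed.

Lemma subring_mx_exp n (K : 'M[S]_n) m :
  (forall i j, V (K i j)) -> forall i j, V ((K ^+ m) i j).
Proof.
move=> VK; elim: m => [|m IH] i j; first by rewrite expr0 mxE; apply: (subring_nat sV).
by rewrite exprSr mxE; apply: (subring_sum sV) => l _; apply: (subringM sV).
Qed.

Lemma ideal1_eigen n (K : 'M[S]_n) (v : 'cV[S]_n) (i0 : 'I_n) w (Q : {poly S}) :
  (forall i j, V (K i j)) -> K *m v = w *: v -> v i0 0 = 1 ->
  (forall i, J Q`_i) -> Q.[w] = 1 -> J 1.
Proof.
move=> VK Kv v1 JQ Qw.
pose M := \sum_(i < size Q) Q`_i *: K ^+ i.
have JM i j : J (M i j).
  rewrite summxE; apply: ideal_sum => l _; rewrite mxE mulrC.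
  by apply: idealM => //; apply: subring_mx_exp.
have detA : \det (1%:M - M) = 0.
  have := @det_mulmx_eq0 _ _ (1%:M - M) v i0; rewrite v1 mulr1; apply.
  by rewrite mulmxBl mul1mx (mulmx_eigen_horner Kv) Qw scale1r subrr.
by have := ideal_det1B JM; rewrite detA sub0r => /idealN; rewrite opprK.
Qed.

Lemma ideal1_integral_horner w (Q : {poly S}) :
  integral_over V w -> (forall i, J Q`_i) -> Q.[w] = 1 -> J 1.
Proof.
move=> [p [mon_p Vp pw]] JQ Qw.
case: (posnP (size p).-1) => [d0|d_gt0].
  have p1 : p`_0 = 1 by rewrite -d0 -lead_coefE; apply/monicP.
  have sz_p : (size p <= 1)%N by move: (leqSpred (size p)); rewrite d0.
  by move: pw; rewrite rootE (size1_polyC sz_p) hornerC p1 oner_eq0.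
apply: (ideal1_eigen (i0 := Ordinal d_gt0) _ (companionmx_powers mon_p pw)) JQ Qw.
- move=> i j; rewrite mxE; case: eqP => _; first exact: (subringN sV).
  exact: (subring_nat sV).
- by rewrite mxE expr0.
Qed.

End Ideal.

Section Adjoin.
Variable S : comNzRingType.

Definition adjoin (V : S -> Prop) (w z : S) :=
  exists q : {poly S}, (forall i, V q`_i) /\ z = q.[w].

Variables (V : S -> Prop) (w : S).
Hypothesis sV : subring V.

Lemma subring_adjoin : subring (adjoin V w).
Proof.
have V0 := subring0 sV; split.
- by exists 0; rewrite horner0; split=> // i; rewrite coef0.
- exists 1; rewrite hornerC; split=> // i; rewrite coefC.
  by case: eqP => _; [apply: (subring1 sV) | apply: V0].
- move=> _ _ [q [Vq ->]] [r [Vr ->]]; exists (q - r); rewrite hornerD hornerN.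
  by split=> // i; rewrite coefB; apply: (subringB sV).
- move=> _ _ [q [Vq ->]] [r [Vr ->]]; exists (q * r); rewrite hornerM.
  by split=> // i; rewrite coefM; apply: (subring_sum sV) => l _; apply: (subringM sV).
Qed.

Lemma adjoin_incl : incl V (adjoin V w).
Proof.
move=> x Vx; exists x%:P; rewrite hornerC; split=> // i; rewrite coefC.
by case: eqP => _ //; apply: (subring0 sV).
Qed.

Lemma adjoin_gen : adjoin V w w.
Proof.
exists 'X; rewrite hornerX; split=> // i; rewrite coefX.
by case: eqP => _; [apply: (subring1 sV) | apply: (subring0 sV)].
Qed.

End Adjoin.

Section IntegralExtension.
Variable S : comNzRingType.
Implicit Types V J A : S -> Prop.

Lemma integral_over_mono V V' w : incl V V' -> integral_over V w -> integral_over V' w.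
Proof. by move=> VV' [p [mon_p Vp pw]]; exists p; split=> // i; apply: VV'. Qed.

Lemma span_prod_mono J J' A A' :
  incl J J' -> incl A A' -> incl (span_prod J A) (span_prod J' A').
Proof.
move=> JJ' AA' _ [s [JAs ->]]; exists s; split=> // p /JAs[Jp Ap].
by split; [apply: JJ' | apply: AA'].
Qed.

Lemma ideal_span_prod V J A :
  subring A -> incl V A -> ideal V J -> ideal A (span_prod J A).
Proof.
move=> sA VA iJ; split.
- move=> _ [s [JAs ->]]; rewrite big_seq; apply: (subring_sum sA) => p /JAs[Jp Ap].
  by apply: (subringM sA) => //; apply/VA/(ideal_sub iJ).
- exact: span_prod0.
- exact: span_prodD.
- move=> a _ Aa [s [JAs ->]]; exists [seq (p.1, a * p.2) | p <- s]; split.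
    by move=> _ /mapP[p /JAs[Jp Ap] ->]; split=> //; apply: (subringM sA).
  by rewrite big_map mulr_sumr; apply: eq_bigr => p _; rewrite mulrCA.
Qed.

Lemma span_prod_adjoin V J w z : ideal V J -> span_prod J (adjoin V w) z ->
  exists Q : {poly S}, (forall i, J Q`_i) /\ z = Q.[w].
Proof.
move=> iJ [s [JAs ->]]; elim: s JAs => [|[j a] s IH] JAs.
  by exists 0; rewrite big_nil horner0; split=> // i; rewrite coef0; apply: (ideal0 iJ).
have [Jj [q [Vq ->]]] : J j /\ adjoin V w a by apply: (JAs (j, a)); rewrite inE eqxx.
have [Q [JQ Qs]] : exists Q : {poly S}, (forall i, J Q`_i) /\ \sum_(p <- s) p.1 * p.2 = Q.[w].
  by apply: IH => p ps; apply: JAs; rewrite inE ps orbT.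
exists (j *: q + Q); rewrite big_cons Qs hornerD hornerZ; split=> // i.
by rewrite coefD coefZ mulrC; apply: (idealD iJ) => //; apply: (idealM iJ).
Qed.

(* Adjoin the integral elements one at a time and come back down with
   [ideal1_integral_horner]. *)
Lemma ideal1_sub_span_integral (s : seq (S * S)) V J : subring V -> ideal V J ->
  (forall p, p \in s -> J p.1 /\ integral_over V p.2) ->
  J (1 - \sum_(p <- s) p.1 * p.2) -> J 1.
Proof.
elim: s V J => [|[j w] s IH] V J sV iJ Js; first by rewrite big_nil subr0.
have [Jj intw] : J j /\ integral_over V w by apply: (Js (j, w)); rewrite inE eqxx.
have [sVw VVw] := (subring_adjoin w sV, adjoin_incl w sV).
have iJw := ideal_span_prod sVw VVw iJ.
have JJw x : J x -> span_prod J (adjoin V w) x.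
  by move=> Jx; rewrite -[x]mulr1; apply: span_prod_mul => //; apply: (subring1 sVw).
move=> J1s; have /(span_prod_adjoin iJ)[Q [JQ Qw]] : span_prod J (adjoin V w) 1.
  apply: (IH _ _ sVw iJw) => [p ps|].
    have [Jp intp] : J p.1 /\ integral_over V p.2 by apply: Js; rewrite inE ps orbT.
    by split; [apply: JJw | apply: integral_over_mono intp].
  have -> : 1 - \sum_(p <- s) p.1 * p.2 = (1 - \sum_(p <- (j, w) :: s) p.1 * p.2) + j * w.
    by rewrite big_cons /=; ring.
  by apply: span_prodD; [apply: JJw | apply: span_prod_mul => //; apply: adjoin_gen].
exact: ideal1_integral_horner intw JQ (esym Qw).
Qed.

Lemma ideal1_span_integral V J : subring V -> ideal V J ->
  span_prod J (integral_over V) 1 -> J 1.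
Proof.
move=> sV iJ [s [Js sum1]]; apply: (ideal1_sub_span_integral sV iJ Js).
by rewrite -sum1 subrr; apply: (ideal0 iJ).
Qed.

Lemma ideal_conductor V x : subring V -> ideal V (conductor V x).
Proof.
move=> sV; split.
- by move=> r [].
- by rewrite /conductor mul0r; split; apply: (subring0 sV).
- by move=> a b [Va Vax] [Vb Vbx]; rewrite /conductor mulrDl; split; apply: (subringD sV).
- by move=> a r Va [Vr Vrx]; rewrite /conductor -mulrA; split; apply: (subringM sV).
Qed.

Lemma conductor_integral_mem V x : subring V ->
  span_prod (conductor V x) (integral_over V) 1 -> V x.
Proof.
move=> sV /(ideal1_span_integral sV (ideal_conductor x sV)) [_].
by rewrite mul1r.
Qed.

End IntegralExtension.

Lemma flat_epi_incl_integral (S : comNzRingType) (R U T : S -> Prop) :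
  subring R -> subring U -> incl R U -> flat_epi R U ->
  subring T -> incl R T -> (forall x, U x -> integral_over T x) -> incl U T.
Proof.
move=> sR sU RU [flatRU epiRU] sT RT intU u Uu.
apply: conductor_integral_mem sT _.
apply: span_prod_mono (flat_epi_conductor sR sU RU Uu flatRU epiRU) => [r [Rr Rru]|//].
by split; apply: RT.
Qed.

Theorem proposition4p18 (S : comNzRingType) (R : S -> Prop) :
  subring R ->
  FCP R (fun _ => True) ->
  almost_Prufer R (fun _ => True) ->
  exists T : S -> Prop,
    [/\ Prufer_hull R (fun _ => True) T,
        Morita_hull R (fun _ => True) T
      & least_integral R (fun _ => True) T].
Proof.
move=> sR _ [T [iT PT intT]]; have [sT RT _] := iT.
have feT : flat_epi R T by apply: PT; split.
have morita U : interm R (fun _ => True) U -> flat_epi R U -> incl U T.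
  by case=> sU RU _ feU; apply: flat_epi_incl_integral feU sT RT _ => // x _; apply: intT.
exists T; split; split=> // U iU.
- by move=> PU; case: (iU) => sU RU _; apply: morita iU (PU U _); split.
- move=> intU; case: iU => sU RU _.
  by apply: flat_epi_incl_integral feT sU RU _ => // x _; apply: intU.
Qed.
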